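(* Let $G$ be an amenable Hausdorff topological group, locally compact or SIN, acting continuously by isometries on a pointed metric space $(\mathcal{M},d,0)$ with bounded orbits. Suppose there is a closed subspace $Y\subset\mathrm{Lip}_0(\mathcal{M})$ such that the map $\mathcal{F}(\mathcal{M})\to Y^*$, $\mu\mapsto(f\mapsto f(\mu))$, is a surjective linear isometry, and such that $S_gf\in Y$ for all $g\in G$ and $f\in Y$. Let $\Psi:\mathrm{Lip}_0(\mathcal{M}/G)\to\mathrm{Lip}_0^G(\mathcal{M})$, $\Psi(f)(x)=f([Gx])$, and $Z:=\Psi^{-1}(Y\cap\mathrm{Lip}_0^G(\mathcal{M}))$. If $Z$ separates the points of $\mathcal{F}(\mathcal{M}/G)$, then $\mathcal{F}(\mathcal{M}/G)$ is isometric to a $1$-complemented subspace of $\mathcal{F}(\mathcal{M})$.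
   Context: $\mathrm{Lip}_0(N)$: real Lipschitz functions on a pointed metric space $N$ vanishing at the base point, normed by the Lipschitz constant; $\delta(m)$ evaluation at $m$; $\mathcal{F}(N)=\overline{\mathrm{span}}\{\delta(m):m\in N\}\subset\mathrm{Lip}_0(N)^*$. For $g\in G$ and $f\in\mathrm{Lip}_0(\mathcal{M})$, $S_gf(m):=f(g^{-1}m)-f(g^{-1}0)$. $\mathcal{M}/G=\{[Gx]:x\in\mathcal{M}\}$ with $[Gx]=\overline{Gx}$, metric $d_{\mathcal{M}/G}([Gx],[Gy])=\inf\{d(x',y'):x'\in[Gx],y'\in[Gy]\}$ (the Hausdorff distance), base point $[G0]$. $\mathrm{Lip}_0^G(\mathcal{M})=\{f\in\mathrm{Lip}_0(\mathcal{M}):f(gx)=f(x)\ \forall g,x\}$. ''$Z$ separates the points of $\mathcal{F}(\mathcal{M}/G)$'': for every nonzero $\mu$ there is $f\in Z$ with $f(\mu)\neq 0$. Amenable: admits a left-invariant mean on bounded left-uniformly continuous functions. SIN: every neighborhood $U$ of $e$ contains a neighborhood $V$ of $e$ with $gVg^{-1}=V$ for all $g$. *)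

From HB Require Import structures.
From mathcomp Require Import all_boot all_order all_algebra.
From mathcomp Require Import all_classical all_reals topology normedtype.
Set Implicit Arguments. Unset Strict Implicit. Unset Printing Implicit Defensive.
Import Order.TTheory GRing.Theory Num.Theory.
Local Open Scope classical_set_scope.
Local Open Scope ring_scope.

Definition is_metric {R : realType} {X : Type} (d : X -> X -> R) : Prop :=
  (forall x y, 0 <= d x y) /\ (forall x y, d x y = 0 <-> x = y) /\
  (forall x y, d x y = d y x) /\ (forall x y z, d x z <= d x y + d y z).

Definition lipc {R : realType} {X : Type} (d : X -> X -> R) (f : X -> R) : R :=
  sup [set r | exists x y, x <> y /\ r = `|f x - f y| / d x y].

Definition lip0 {R : realType} {X : Type} (d : X -> X -> R) (x0 : X) (f : X -> R) : Prop :=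
  f x0 = 0 /\ exists L : R, forall x y, `|f x - f y| <= L * d x y.

(* elements of Lip_0(X)^* are represented by functionals (X -> R) -> R,
   of which only the values on Lip_0(X) matter *)
Definition feq {R : realType} {X : Type} (d : X -> X -> R) (x0 : X)
  (phi psi : (X -> R) -> R) : Prop := forall f, lip0 d x0 f -> phi f = psi f.

(* the finite combination sum_i a_i delta(m_i), evaluated at f *)
Definition deval {R : realType} {X : Type} (s : seq (R * X)) (f : X -> R) : R :=
  \sum_(p <- s) p.1 * f p.2.

(* F(X): the norm closure in Lip_0(X)^* of span{delta(m)} *)
Definition free_space {R : realType} {X : Type} (d : X -> X -> R) (x0 : X)
  : set ((X -> R) -> R) :=
  [set phi | forall eps : R, 0 < eps -> exists s : seq (R * X),
     forall f, lip0 d x0 f -> `|phi f - deval s f| <= eps * lipc d f].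

Definition dualnorm {R : realType} {X : Type} (d : X -> X -> R) (x0 : X)
  (phi : (X -> R) -> R) : R :=
  sup [set r | exists f, lip0 d x0 f /\ lipc d f <= 1 /\ r = `|phi f|].

Definition one_complemented_copy {R : realType} {N M : Type}
  (dN : N -> N -> R) (n0 : N) (dM : M -> M -> R) (m0 : M) : Prop :=
  exists (T : ((N -> R) -> R) -> ((M -> R) -> R))
         (P : ((M -> R) -> R) -> ((M -> R) -> R)),
    [/\ (forall mu, free_space dN n0 mu -> free_space dM m0 (T mu)),
        (forall (a : R) mu nu, free_space dN n0 mu -> free_space dN n0 nu ->
           feq dM m0 (T (fun f => a * mu f + nu f)) (fun f => a * T mu f + T nu f)),
        (forall mu, free_space dN n0 mu -> dualnorm dM m0 (T mu) = dualnorm dN n0 mu) &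
        [/\ (forall nu, free_space dM m0 nu -> free_space dM m0 (P nu)),
        (forall (a : R) mu nu, free_space dM m0 mu -> free_space dM m0 nu ->
           feq dM m0 (P (fun f => a * mu f + nu f)) (fun f => a * P mu f + P nu f)),
        (forall nu, free_space dM m0 nu -> dualnorm dM m0 (P nu) <= dualnorm dM m0 nu),
        (forall nu, free_space dM m0 nu ->
           exists mu, free_space dN n0 mu /\ feq dM m0 (P nu) (T mu)) &
        (forall mu, free_space dN n0 mu -> feq dM m0 (P (T mu)) (T mu))]].

Definition closed_lip_subspace {R : realType} {M : Type} (d : M -> M -> R) (x0 : M)
  (Y : set (M -> R)) : Prop :=
  [/\ (forall f, Y f -> lip0 d x0 f),
      Y (fun _ => 0),
      (forall (a : R) f g, Y f -> Y g -> Y (fun x => a * f x + g x)) &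
      (forall f, lip0 d x0 f ->
         (forall eps : R, 0 < eps -> exists g, Y g /\ lipc d (fun x => f x - g x) <= eps) ->
         Y f)].

Definition predual_of_free {R : realType} {M : Type} (d : M -> M -> R) (x0 : M)
  (Y : set (M -> R)) : Prop :=
  (forall mu, free_space d x0 mu ->
     sup [set r | exists f, Y f /\ lipc d f <= 1 /\ r = `|mu f|] = dualnorm d x0 mu) /\
  (forall psi : (M -> R) -> R,
     (forall (a : R) f g, Y f -> Y g -> psi (fun x => a * f x + g x) = a * psi f + psi g) ->
     (exists C : R, forall f, Y f -> `|psi f| <= C * lipc d f) ->
     exists mu, free_space d x0 mu /\ forall f, Y f -> mu f = psi f).

Definition topological_group (G : topologicalType)
  (mul : G -> G -> G) (inv : G -> G) (e : G) : Prop :=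
  [/\ (forall x y z, mul x (mul y z) = mul (mul x y) z),
      (forall x, mul e x = x), (forall x, mul x e = x),
      (forall x, mul (inv x) x = e) &
      [/\ (forall x, mul x (inv x) = e),
      continuous (fun p : G * G => mul p.1 p.2) &
      continuous inv]].

Definition loc_compact_space (G : topologicalType) : Prop :=
  forall x : G, exists K : set G, nbhs x K /\ compact K.

Definition SIN_group (G : topologicalType) (mul : G -> G -> G) (inv : G -> G) (e : G) : Prop :=
  forall U : set G, nbhs e U -> exists V : set G,
    [/\ nbhs e V, V `<=` U & forall g, [set mul (mul g v) (inv g) | v in V] = V].

Definition bounded_luc {R : realType} (G : topologicalType) (mul : G -> G -> G) (e : G)
  (f : G -> R) : Prop :=
  (exists C : R, forall x, `|f x| <= C) /\
  (forall eps : R, 0 < eps -> exists U : set G,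
     nbhs e U /\ forall u x, U u -> `|f (mul u x) - f x| <= eps).

Definition amenable (R : realType) (G : topologicalType) (mul : G -> G -> G) (e : G) : Prop :=
  exists m : (G -> R) -> R,
    [/\ (forall (a : R) f h, bounded_luc mul e f -> bounded_luc mul e h ->
           m (fun x => a * f x + h x) = a * m f + m h),
        (forall f, bounded_luc mul e f -> (forall x, 0 <= f x) -> 0 <= m f),
        m (fun _ => 1) = 1 &
        (forall g f, bounded_luc mul e f -> m (fun x => f (mul g x)) = m f)].

Definition cont_isom_action {R : realType} (G : topologicalType) (M : Type)
  (mul : G -> G -> G) (e : G) (d : M -> M -> R) (act : G -> M -> M) : Prop :=
  [/\ (forall x, act e x = x),
      (forall g h x, act (mul g h) x = act g (act h x)),
      (forall g x y, d (act g x) (act g y) = d x y) &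
      (forall g x (eps : R), 0 < eps -> exists U : set G, exists2 delta : R,
         nbhs g U /\ 0 < delta &
         forall h y, U h -> d x y < delta -> d (act g x) (act h y) < eps)].

Definition bounded_orbits {R : realType} (G : Type) (M : Type)
  (d : M -> M -> R) (act : G -> M -> M) : Prop :=
  forall x, exists C : R, forall g, d x (act g x) <= C.

Definition lip_shift {R : realType} (G M : Type) (inv : G -> G) (act : G -> M -> M)
  (x0 : M) (g : G) (f : M -> R) : M -> R :=
  fun m => f (act (inv g) m) - f (act (inv g) x0).

Definition lip0G {R : realType} (G M : Type) (d : M -> M -> R) (x0 : M)
  (act : G -> M -> M) (f : M -> R) : Prop :=
  lip0 d x0 f /\ forall g x, f (act g x) = f x.

Definition orbcl {R : realType} (G M : Type) (d : M -> M -> R) (act : G -> M -> M)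
  (x : M) : set M :=
  [set y | forall eps : R, 0 < eps -> exists g, d y (act g x) < eps].

Definition orbit_quot {R : realType} (G M : Type) (d : M -> M -> R) (act : G -> M -> M) : Type :=
  {S : set M | exists x, S = orbcl d act x}.

Definition qcl {R : realType} (G M : Type) (d : M -> M -> R) (act : G -> M -> M)
  (x : M) : orbit_quot d act :=
  exist _ (orbcl d act x) (ex_intro _ x erefl).

Definition dquot {R : realType} (G M : Type) (d : M -> M -> R) (act : G -> M -> M)
  (S T : orbit_quot d act) : R :=
  inf [set r | exists x y, proj1_sig S x /\ proj1_sig T y /\ r = d x y].

Definition Psi_quot {R : realType} (G M : Type) (d : M -> M -> R) (act : G -> M -> M)
  (f : orbit_quot d act -> R) : M -> R := fun x => f (qcl d act x).

From HB Require Import structures.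
From mathcomp Require Import all_boot all_order all_algebra.
From mathcomp Require Import all_classical all_reals topology normedtype.
From mathcomp Require Import ring lra.
Set Implicit Arguments. Unset Strict Implicit. Unset Printing Implicit Defensive.
Import Order.TTheory GRing.Theory Num.Theory.
Local Open Scope classical_set_scope.
Local Open Scope ring_scope.

(* An invariant mean m on G (amenability) yields the averaging operator
     B f [Gx] = m(g |-> f(g^-1 x)) - m(g |-> f(g^-1 x0)),
   a linear operator Lip_0(M) -> Lip_0(M/G) of norm <= 1 which inverts
   Psi on G-invariant functions.  The rest is an abstract argument: for a
   1-Lipschitz map q : M -> N, a predual Y of F(M) and such an operator B,
   T mu := (the element of F(M) acting on Y as f |-> mu (B f)) is an isometric
   embedding F(N) -> F(M) whose left inverse is the pushforward along q,
   provided the functions h with h o q in Y and B (h o q) = h separate F(N). *)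

Lemma eq0_of_le_eps (R : realType) (a K : R) :
  0 <= K -> (forall eps : R, 0 < eps -> `|a| <= eps * K) -> a = 0.
Proof.
move=> K0 small; apply/eqP/negPn/negP => a_neq0.
have a_gt0 : 0 < `|a| by rewrite normr_gt0.
have := small (`|a| / (K + 1)) (divr_gt0 a_gt0 (ltr_wpDl K0 ltr01)).
rewrite mulrAC ler_pdivlMr ?ltr_wpDl // => le_aK.
have : `|a| * (K + 1) - `|a| * K <= 0 by rewrite subr_le0.
by rewrite -mulrBr addrAC subrr add0r mulr1 leNgt a_gt0.
Qed.

Section LipschitzConstant.
Variables (R : realType) (X : Type) (d : X -> X -> R) (x0 : X).
Hypothesis d_ge0 : forall x y, 0 <= d x y.

Definition lip_ratios (f : X -> R) : set R :=
  [set r | exists x y, x <> y /\ r = `|f x - f y| / d x y].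

Lemma lip_ratios_ub f L : (forall x y, `|f x - f y| <= L * d x y) ->
  ubound (lip_ratios f) `|L|.
Proof.
move=> fL r [x [y [_ ->]]].
have [dxy0|dxy_neq0] := eqVneq (d x y) 0; first by rewrite dxy0 invr0 mulr0.
have dxy_gt0 : 0 < d x y by rewrite lt_neqAle eq_sym dxy_neq0 d_ge0.
by rewrite ler_pdivrMr //; apply: le_trans (fL x y) _; rewrite ler_wpM2r ?ler_norm.
Qed.

Lemma lipc_ge0 f : lip0 d x0 f -> 0 <= lipc d f.
Proof.
move=> [_ [L fL]]; rewrite /lipc -/(lip_ratios f).
have [[r rf]|no_ratio] := pselect (exists r, lip_ratios f r).
  apply: le_trans (ub_le_sup (ex_intro _ _ (lip_ratios_ub fL)) rf).
  by case: rf => x [y [_ ->]]; rewrite divr_ge0.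
suff -> : lip_ratios f = set0 by rewrite sup0.
by apply/funext => r; apply/propext; split => // rf; apply: no_ratio; exists r.
Qed.

Lemma lipc_bound f : lip0 d x0 f -> forall x y, `|f x - f y| <= lipc d f * d x y.
Proof.
move=> f_lip x y; have lipc0 := lipc_ge0 f_lip.
have [->|x_neq_y] := pselect (x = y); first by rewrite subrr normr0 mulr_ge0.
case: f_lip => _ [L fL].
have [dxy0|dxy_neq0] := eqVneq (d x y) 0.
  by move: (fL x y); rewrite dxy0 !mulr0.
have dxy_gt0 : 0 < d x y by rewrite lt_neqAle eq_sym dxy_neq0 d_ge0.
rewrite -ler_pdivrMr //; apply: (ub_le_sup (ex_intro _ _ (lip_ratios_ub fL))).
by exists x, y.
Qed.

Lemma lipc_le f L : 0 <= L -> (forall x y, `|f x - f y| <= L * d x y) -> lipc d f <= L.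
Proof.
move=> L0 fL; rewrite /lipc -/(lip_ratios f).
have [[r rf]|no_ratio] := pselect (exists r, lip_ratios f r).
  by apply: ge_sup; [exists r | rewrite -[L]ger0_norm //; exact: lip_ratios_ub].
suff -> : lip_ratios f = set0 by rewrite sup0.
by apply/funext => r; apply/propext; split => // rf; apply: no_ratio; exists r.
Qed.

Lemma lip0_lincomb (a : R) f g : lip0 d x0 f -> lip0 d x0 g ->
  lip0 d x0 (fun x => a * f x + g x) /\
  lipc d (fun x => a * f x + g x) <= `|a| * lipc d f + lipc d g.
Proof.
move=> f_lip g_lip.
have bound x y : `|a * f x + g x - (a * f y + g y)| <=
    (`|a| * lipc d f + lipc d g) * d x y.
  have -> : a * f x + g x - (a * f y + g y) = a * (f x - f y) + (g x - g y) by ring.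
  apply: le_trans (ler_normD _ _) _; rewrite normrM mulrDl -mulrA.
  by apply: lerD; [apply: ler_wpM2l => //; exact: lipc_bound | exact: lipc_bound].
have c0 : 0 <= `|a| * lipc d f + lipc d g.
  by rewrite addr_ge0 ?mulr_ge0 ?lipc_ge0.
split; last exact: lipc_le.
split; last by exists (`|a| * lipc d f + lipc d g).
by case: f_lip => -> _; case: g_lip => -> _; rewrite mulr0 addr0.
Qed.

Lemma lip0_zero : lip0 d x0 (fun _ => 0) /\ lipc d (fun _ : X => 0 : R) <= 1.
Proof.
split; first by split => //; exists 0 => x y; rewrite subrr normr0 mul0r.
by apply: lipc_le => // x y; rewrite subrr normr0 mul1r.
Qed.

End LipschitzConstant.

Section FreeSpace.
Variables (R : realType) (X : Type) (d : X -> X -> R) (x0 : X).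
Hypothesis d_ge0 : forall x y, 0 <= d x y.

Lemma deval_bound s f : lip0 d x0 f ->
  `|deval s f| <= lipc d f * \sum_(p <- s) `|p.1| * d p.2 x0.
Proof.
move=> f_lip; rewrite /deval mulr_sumr.
apply: le_trans (ler_norm_sum _ _ _) _; apply: ler_sum => p _.
rewrite normrM mulrCA ler_wpM2l //.
by have := lipc_bound d_ge0 f_lip p.2 x0; case: f_lip => -> _; rewrite subr0.
Qed.

Lemma free_bounded mu : free_space d x0 mu ->
  exists K, 0 <= K /\ forall f, lip0 d x0 f -> `|mu f| <= K * lipc d f.
Proof.
move=> mu_free; have [s s_near] := mu_free 1 ltr01.
exists (\sum_(p <- s) `|p.1| * d p.2 x0 + 1); split.
  by rewrite addr_ge0 // sumr_ge0 // => p _; rewrite mulr_ge0.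
move=> f f_lip; have -> : mu f = deval s f + (mu f - deval s f) by ring.
apply: le_trans (ler_normD _ _) _.
by rewrite mulrDl [_ * lipc d f]mulrC; apply: lerD; [exact: deval_bound | exact: s_near].
Qed.

(* Elements of F(X) are linear on Lip_0(X), being limits of finite combinations. *)
Lemma free_linear mu (a : R) f g : free_space d x0 mu -> lip0 d x0 f -> lip0 d x0 g ->
  mu (fun x => a * f x + g x) = a * mu f + mu g.
Proof.
move=> mu_free f_lip g_lip; have [fg_lip _] := lip0_lincomb d_ge0 a f_lip g_lip.
apply/eqP; rewrite -subr_eq0; apply/eqP.
apply: (@eq0_of_le_eps _ _ (lipc d (fun x => a * f x + g x) + `|a| * lipc d f + lipc d g)).
  by rewrite !addr_ge0 ?mulr_ge0 ?(lipc_ge0 d_ge0 fg_lip) ?(lipc_ge0 d_ge0 f_lip)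
             ?(lipc_ge0 d_ge0 g_lip).
move=> eps eps_gt0; have [s s_near] := mu_free eps eps_gt0.
have deval_lin : deval s (fun x => a * f x + g x) = a * deval s f + deval s g.
  by rewrite /deval mulr_sumr -big_split /=; apply: eq_bigr => p _; ring.
have -> : mu (fun x => a * f x + g x) - (a * mu f + mu g) =
  (mu (fun x => a * f x + g x) - deval s (fun x => a * f x + g x))
  - a * (mu f - deval s f) - (mu g - deval s g) by rewrite deval_lin; ring.
apply: le_trans (ler_normB _ _) _; apply: le_trans (lerD (ler_normB _ _) (lexx _)) _.
rewrite normrM !mulrDr; apply: lerD; last exact: s_near.
by apply: lerD; [exact: s_near | rewrite mulrCA ler_wpM2l // s_near].
Qed.

Lemma free_lincomb mu nu (a : R) : free_space d x0 mu -> free_space d x0 nu ->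
  free_space d x0 (fun f => a * mu f + nu f).
Proof.
move=> mu_free nu_free eps eps_gt0.
have e1 : 0 < eps / (2 * (`|a| + 1)) by rewrite divr_gt0 // mulr_gt0 // ltr_wpDl.
have [s1 s1_near] := mu_free _ e1.
have [s2 s2_near] := nu_free _ (divr_gt0 eps_gt0 (ltr0n _ 2)).
exists ([seq (a * p.1, p.2) | p <- s1] ++ s2) => f f_lip.
have -> : deval ([seq (a * p.1, p.2) | p <- s1] ++ s2) f = a * deval s1 f + deval s2 f.
  rewrite /deval big_cat big_map /= mulr_sumr.
  by congr (_ + _); apply: eq_bigr => p _; ring.
have -> : a * mu f + nu f - (a * deval s1 f + deval s2 f) =
   a * (mu f - deval s1 f) + (nu f - deval s2 f) by ring.
apply: le_trans (ler_normD _ _) _; rewrite normrM.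
apply: le_trans (lerD (ler_wpM2l (normr_ge0 a) (s1_near f f_lip)) (s2_near f f_lip)) _.
rewrite mulrA -mulrDl ler_wpM2r ?(lipc_ge0 d_ge0 f_lip) //.
have a_small : `|a| * (eps / (2 * (`|a| + 1))) <= eps / 2.
  rewrite mulrA ler_pdivrMr ?mulr_gt0 ?ltr_wpDl //.
  rewrite mulrA -[eps / 2 * 2]mulrA mulVf ?pnatr_eq0 // mulr1 mulrC.
  by apply: ler_wpM2l; [exact: ltW | lra].
by apply: le_trans (lerD a_small (lexx _)) _; rewrite -splitr.
Qed.

Lemma dualnorm_ge mu f : free_space d x0 mu -> lip0 d x0 f -> lipc d f <= 1 ->
  `|mu f| <= dualnorm d x0 mu.
Proof.
move=> mu_free f_lip f_le1; have [K [K0 muK]] := free_bounded mu_free.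
apply: ub_le_sup; last by exists f.
exists K => r [g [g_lip [g_le1 ->]]].
by apply: le_trans (muK g g_lip) _; rewrite ler_piMr.
Qed.

Lemma dualnorm_feq mu nu : feq d x0 mu nu -> dualnorm d x0 mu = dualnorm d x0 nu.
Proof.
move=> mu_nu; rewrite /dualnorm; congr sup; apply/funext => r; apply/propext.
by split => -[f [f_lip [f_le1 ->]]]; exists f; rewrite (mu_nu f f_lip).
Qed.

Lemma dualnorm_le0_feq0 xi : free_space d x0 xi -> dualnorm d x0 xi <= 0 ->
  feq d x0 xi (fun _ => 0).
Proof.
move=> xi_free xi_le0 f f_lip; have [zero_lip _] := lip0_zero x0 d_ge0.
pose c := (lipc d f + 1)^-1.
have c_gt0 : 0 < c by rewrite invr_gt0 ltr_wpDl ?(lipc_ge0 d_ge0 f_lip).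
have xi0 : xi (fun _ => 0) = 0.
  have := free_linear 1 xi_free zero_lip zero_lip.
  have -> : (fun x : X => 1 * 0 + 0) = (fun _ => 0 : R).
    by apply/funext => x; rewrite mul1r addr0.
  by move=> h; lra.
have [cf_lip _] := lip0_lincomb d_ge0 c f_lip zero_lip.
have cf_le1 : lipc d (fun x => c * f x + 0) <= 1.
  apply: lipc_le => // x y.
  have -> : c * f x + 0 - (c * f y + 0) = c * (f x - f y) by ring.
  rewrite normrM (gtr0_norm c_gt0) mul1r /c mulrC ler_pdivrMr ?ltr_wpDl ?(lipc_ge0 d_ge0 f_lip) //.
  apply: le_trans (lipc_bound d_ge0 f_lip x y) _.
  by rewrite mulrC ler_wpM2l //; lra.
have := dualnorm_ge xi_free cf_lip cf_le1.
rewrite (free_linear c xi_free f_lip zero_lip) xi0 addr0 => xi_le.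
have : `|c * xi f| <= 0 by apply: le_trans xi_le xi_le0.
by rewrite normr_le0 mulf_eq0 (gt_eqF c_gt0) => /eqP.
Qed.

Lemma feq_of_agree_on_predual (Y : set (X -> R)) mu nu :
  closed_lip_subspace d x0 Y -> predual_of_free d x0 Y ->
  free_space d x0 mu -> free_space d x0 nu -> (forall f, Y f -> mu f = nu f) ->
  feq d x0 mu nu.
Proof.
move=> [_ Y0 _ _] [Y_norming _] mu_free nu_free agree.
have diff_free := free_lincomb (-1) nu_free mu_free.
have diff0 : feq d x0 (fun f => -1 * nu f + mu f) (fun _ => 0).
  apply: dualnorm_le0_feq0 => //; rewrite -(Y_norming _ diff_free); apply: ge_sup.
    exists `|-1 * nu (fun _ => 0) + mu (fun _ => 0)|, (fun _ => 0).
    by split => //; split => //; case: (lip0_zero x0 d_ge0).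
  by move=> r [f [Yf [_ ->]]]; rewrite agree // mulN1r addNr normr0.
by move=> f f_lip; have := diff0 f f_lip => /= ?; lra.
Qed.

End FreeSpace.

Section GroupAlgebra.
Variables (G : topologicalType) (mul : G -> G -> G) (inv : G -> G) (e : G).
Hypothesis G_group : topological_group mul inv e.

Lemma grp_left_inv_uniq y c : mul y c = e -> y = inv c.
Proof.
case: G_group => [mulA mul1g mulg1 _ [mulgV _ _]] yc_e.
by rewrite -(mulg1 y) -(mulgV c) mulA yc_e mul1g.
Qed.

Lemma grp_invM a b : inv (mul a b) = mul (inv b) (inv a).
Proof.
symmetry; apply: grp_left_inv_uniq.
case: G_group => [mulA mul1g _ mulVg _].
by rewrite -mulA [mul (inv a) _]mulA mulVg mul1g mulVg.
Qed.

Lemma grp_inv1 : inv e = e.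
Proof. by symmetry; apply: grp_left_inv_uniq; case: G_group => [_ -> _ _ _]. Qed.

Lemma grp_invK h : inv (inv h) = h.
Proof. by symmetry; apply: grp_left_inv_uniq; case: G_group => [_ _ _ _ []]. Qed.

End GroupAlgebra.

Section InvariantMean.
Variables (R : realType) (G : topologicalType) (mul : G -> G -> G) (e : G).

Lemma luc_const (c : R) : bounded_luc mul e (fun _ => c).
Proof.
split; first by exists `|c|.
move=> eps eps_gt0; exists setT; split; first exact: filterT.
by move=> u x _; rewrite subrr normr0 ltW.
Qed.

Lemma luc_lincomb (a : R) f h : bounded_luc mul e f -> bounded_luc mul e h ->
  bounded_luc mul e (fun x => a * f x + h x).
Proof.
move=> [[C1 f_bd] f_uc] [[C2 h_bd] h_uc]; split.
  exists (`|a| * C1 + C2) => x; apply: le_trans (ler_normD _ _) _.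
  by rewrite normrM lerD // ler_wpM2l.
move=> eps eps_gt0.
have [U1 [U1e U1_uc]] := f_uc _ (divr_gt0 (divr_gt0 eps_gt0 (ltr0n _ 2)) (ltr_wpDl (normr_ge0 a) ltr01)).
have [U2 [U2e U2_uc]] := h_uc _ (divr_gt0 eps_gt0 (ltr0n _ 2)).
exists (U1 `&` U2); split; first exact: filterI.
move=> u x [u1 u2].
have -> : a * f (mul u x) + h (mul u x) - (a * f x + h x) =
  a * (f (mul u x) - f x) + (h (mul u x) - h x) by ring.
apply: le_trans (ler_normD _ _) _; rewrite normrM.
apply: le_trans (lerD (ler_wpM2l (normr_ge0 a) (U1_uc u x u1)) (U2_uc u x u2)) _.
have : `|a| * (eps / 2 / (`|a| + 1)) <= eps / 2.
  by rewrite mulrA ler_pdivrMr ?ltr_wpDl //; nra.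
lra.
Qed.

Definition invariant_mean (m : (G -> R) -> R) : Prop :=
  [/\ (forall (a : R) f h, bounded_luc mul e f -> bounded_luc mul e h ->
         m (fun x => a * f x + h x) = a * m f + m h),
      (forall f, bounded_luc mul e f -> (forall x, 0 <= f x) -> 0 <= m f),
      m (fun _ => 1) = 1 &
      (forall g f, bounded_luc mul e f -> m (fun x => f (mul g x)) = m f)].

Variable m : (G -> R) -> R.
Hypothesis m_mean : invariant_mean m.

Lemma mean_const (c : R) : m (fun _ => c) = c.
Proof.
have [m_lin _ m1 _] := m_mean.
have m0 : m (fun _ => 0) = 0.
  have := m_lin 1 _ _ (luc_const 0) (luc_const 0).
  have -> : (fun x : G => 1 * 0 + 0) = (fun _ => 0 : R).
    by apply/funext => x; rewrite mul1r addr0.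
  by move=> ?; lra.
have := m_lin c _ _ (luc_const 1) (luc_const 0).
have -> : (fun x : G => c * 1 + 0) = (fun _ => c) by apply/funext => x; rewrite mulr1 addr0.
by rewrite m1 m0 mulr1 addr0.
Qed.

Lemma mean_norm_le D (c : R) : bounded_luc mul e D -> (forall x, `|D x| <= c) -> `|m D| <= c.
Proof.
move=> D_luc D_le; have [m_lin m_pos _ _] := m_mean.
have shift_ge0 (s : R) : s = 1 \/ s = -1 -> 0 <= s * m D + c.
  move=> s_pm1; rewrite -[X in _ + X](mean_const c) -m_lin //; last exact: luc_const.
  apply: m_pos; first exact: (luc_lincomb s D_luc (luc_const c)).
  by move=> x /=; have := D_le x; rewrite ler_norml => /andP[? ?]; case: s_pm1 => ->; lra.
have := shift_ge0 1 (or_introl erefl); have := shift_ge0 (-1) (or_intror erefl).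
by rewrite ler_norml => ? ?; apply/andP; split; lra.
Qed.

End InvariantMean.

Definition orbit_fun (R : realType) (G M : Type) (inv : G -> G) (act : G -> M -> M)
  (f : M -> R) (y : M) : G -> R := fun g => f (act (inv g) y).

Definition orbit_avg (R : realType) (G M : Type) (inv : G -> G) (act : G -> M -> M)
  (m : (G -> R) -> R) (x0 : M) (f : M -> R) (y : M) : R :=
  m (orbit_fun inv act f y) - m (orbit_fun inv act f x0).

Section OrbitAverage.
Variables (R : realType) (G : topologicalType) (mul : G -> G -> G) (inv : G -> G) (e : G).
Variables (M : Type) (d : M -> M -> R) (x0 : M) (act : G -> M -> M) (m : (G -> R) -> R).
Hypotheses (G_group : topological_group mul inv e) (d_metric : is_metric d)
  (act_isom : cont_isom_action mul e d act) (bd_orbits : bounded_orbits d act)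
  (m_mean : invariant_mean mul e m).

Let d_ge0 x y : 0 <= d x y. Proof. by case: d_metric. Qed.
Let d_xx x : d x x = 0. Proof. by case: d_metric => _ [dP _]; apply/dP. Qed.
Let d_sym x y : d x y = d y x. Proof. by case: d_metric => _ [_ []]. Qed.
Let d_tri x y z : d x z <= d x y + d y z. Proof. by case: d_metric => _ [_ [_ ]]. Qed.

Local Notation A := (orbit_avg inv act m x0).

(* Orbit functions of Lipschitz functions are bounded (the orbits are bounded)
   and left-uniformly continuous (the action is continuous at e), so the mean
   applies to them. *)
Lemma orbit_fun_luc f y : lip0 d x0 f -> bounded_luc mul e (orbit_fun inv act f y).
Proof.
move=> f_lip; have L0 := lipc_ge0 d_ge0 f_lip; have f_bd := lipc_bound d_ge0 f_lip.
case: act_isom => [act1 actM act_iso act_cont]; split.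
  have [C orbit_bd] := bd_orbits y.
  exists (lipc d f * (C + d y x0)) => g; rewrite /orbit_fun.
  have -> : f (act (inv g) y) = f (act (inv g) y) - f x0 by case: f_lip => -> _; rewrite subr0.
  apply: le_trans (f_bd _ _) _; rewrite ler_wpM2l //.
  by apply: le_trans (d_tri _ y _) _; rewrite lerD // d_sym.
move=> eps eps_gt0.
have [U [delta [Ue delta_gt0] near_y]] :=
  act_cont e y _ (divr_gt0 eps_gt0 (ltr_wpDl L0 ltr01)).
have inv_Ue : nbhs e (inv @^-1` U).
  case: G_group => _ _ _ _ [_ _ inv_cont].
  by have := inv_cont e; rewrite /continuous_at (grp_inv1 G_group); apply.
exists (inv @^-1` U); split => // u x Uu; rewrite /orbit_fun (grp_invM G_group) actM.
apply: le_trans (f_bd _ _) _; rewrite act_iso d_sym.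
have := near_y (inv u) y Uu; rewrite d_xx act1 => /(_ delta_gt0) close.
apply: le_trans (ler_wpM2l L0 (ltW close)) _.
by rewrite mulrA ler_pdivrMr ?ltr_wpDl //; nra.
Qed.

Lemma orbit_avg_lip f y z : lip0 d x0 f -> `|A f y - A f z| <= lipc d f * d y z.
Proof.
move=> f_lip; have [m_lin _ _ _] := m_mean; rewrite /orbit_avg.
have -> : m (orbit_fun inv act f y) - m (orbit_fun inv act f x0) -
    (m (orbit_fun inv act f z) - m (orbit_fun inv act f x0))
   = -1 * m (orbit_fun inv act f z) + m (orbit_fun inv act f y) by ring.
rewrite -m_lin; try exact: orbit_fun_luc.
apply: (mean_norm_le m_mean); first by apply: luc_lincomb; exact: orbit_fun_luc.
move=> g /=; rewrite /orbit_fun.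
have -> : -1 * f (act (inv g) z) + f (act (inv g) y) =
  f (act (inv g) y) - f (act (inv g) z) by ring.
by apply: le_trans (lipc_bound d_ge0 f_lip _ _) _; case: act_isom => _ _ -> _.
Qed.

(* ... constant on orbits, by left invariance of the mean ... *)
Lemma orbit_avg_act f h y : lip0 d x0 f -> A f (act h y) = A f y.
Proof.
move=> f_lip; have [_ _ _ m_inv] := m_mean; rewrite /orbit_avg; congr (_ - _).
have -> : orbit_fun inv act f (act h y) = (fun x => orbit_fun inv act f y (mul (inv h) x)).
  apply/funext => x; rewrite /orbit_fun (grp_invM G_group) (grp_invK G_group).
  by case: act_isom => _ -> _ _.
by rewrite m_inv //; exact: orbit_fun_luc.
Qed.

Lemma orbit_avg_orbcl f y z : lip0 d x0 f -> orbcl d act y z -> A f z = A f y.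
Proof.
move=> f_lip z_in; have L0 := lipc_ge0 d_ge0 f_lip.
apply/eqP; rewrite -subr_eq0; apply/eqP; apply: (eq0_of_le_eps L0) => eps eps_gt0.
have [g z_near] := z_in eps eps_gt0.
rewrite -(orbit_avg_act g y f_lip).
by apply: le_trans (orbit_avg_lip _ _ f_lip) _; rewrite mulrC ler_wpM2r // ltW.
Qed.

Lemma orbit_avg_lin (a : R) f h y : lip0 d x0 f -> lip0 d x0 h ->
  A (fun x => a * f x + h x) y = a * A f y + A h y.
Proof.
move=> f_lip h_lip; have [m_lin _ _ _] := m_mean; rewrite /orbit_avg.
have split_m z : m (orbit_fun inv act (fun x => a * f x + h x) z) =
    a * m (orbit_fun inv act f z) + m (orbit_fun inv act h z).
  by rewrite -m_lin //; exact: orbit_fun_luc.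
by rewrite !split_m; ring.
Qed.

Lemma orbit_avg_fix f y : f x0 = 0 -> (forall g x, f (act g x) = f x) -> A f y = f y.
Proof.
move=> f_x0 f_inv; rewrite /orbit_avg /orbit_fun.
have const z : (fun g => f (act (inv g) z)) = (fun _ => f z).
  by apply/funext => g; rewrite f_inv.
by rewrite !const !(mean_const m_mean) f_x0 subr0.
Qed.

End OrbitAverage.

(* A chosen point of an orbit closure, and the averaging operator
   B : Lip_0(M) -> Lip_0(M/G), B f [Gx] = A f x, well defined since A f is
   constant on orbit closures. *)
Definition rep (R : realType) (G M : Type) (d : M -> M -> R) (act : G -> M -> M)
  (S : orbit_quot d act) : M := projT1 (cid (proj2_sig S)).

Definition quot_avg (R : realType) (G M : Type) (d : M -> M -> R) (inv : G -> G)
  (act : G -> M -> M) (m : (G -> R) -> R) (x0 : M) (f : M -> R)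
  (S : orbit_quot d act) : R :=
  orbit_avg inv act m x0 f (rep S).

Section QuotientAverage.
Variables (R : realType) (G : topologicalType) (mul : G -> G -> G) (inv : G -> G) (e : G).
Variables (M : Type) (d : M -> M -> R) (x0 : M) (act : G -> M -> M) (m : (G -> R) -> R).
Hypotheses (G_group : topological_group mul inv e) (d_metric : is_metric d)
  (act_isom : cont_isom_action mul e d act) (bd_orbits : bounded_orbits d act)
  (m_mean : invariant_mean mul e m).

Let d_ge0 x y : 0 <= d x y. Proof. by case: d_metric. Qed.

Local Notation N := (@orbit_quot R G M d act).
Local Notation dN := (@dquot R G M d act).
Local Notation n0 := (@qcl R G M d act x0).
Local Notation B := (quot_avg inv m x0).

Lemma rep_spec (S : N) : proj1_sig S = orbcl d act (rep S).
Proof. by rewrite /rep; case: cid => /= x ->. Qed.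

Lemma orbcl_refl x : orbcl d act x x.
Proof.
move=> eps eps_gt0; exists e; case: act_isom => -> _ _ _.
by case: d_metric => _ [dP _]; rewrite (proj2 (dP x x) erefl).
Qed.

Lemma rep_in (S : N) : proj1_sig S (rep S).
Proof. by rewrite rep_spec; exact: orbcl_refl. Qed.

Lemma qcl_rep (S : N) : qcl d act (rep S) = S.
Proof.
have := rep_spec S; move: (rep S) => x.
case: S => S0 S0_orb /= S0_x; subst S0; rewrite /qcl; congr exist; exact: Prop_irrelevance.
Qed.

Lemma dquot_ge0 (S T : N) : 0 <= dN S T.
Proof.
apply: lb_le_inf; first by exists (d (rep S) (rep T)), (rep S), (rep T); split; [exact: rep_in | split; [exact: rep_in |]].
by move=> r [x [y [_ [_ ->]]]].
Qed.

Lemma dquot_le x y : dN (qcl d act x) (qcl d act y) <= d x y.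
Proof.
apply: ge_inf; first by exists 0 => r [a [b [_ [_ ->]]]].
by exists x, y; split; [exact: orbcl_refl | split; [exact: orbcl_refl |]].
Qed.

Lemma quot_avg_val f (S : N) s : lip0 d x0 f -> proj1_sig S s ->
  B f S = orbit_avg inv act m x0 f s.
Proof.
move=> f_lip s_in; rewrite /quot_avg; symmetry.
apply: (orbit_avg_orbcl G_group d_metric act_isom bd_orbits m_mean f_lip).
by rewrite -rep_spec.
Qed.

Lemma quot_avg_bound f (S T : N) : lip0 d x0 f -> `|B f S - B f T| <= lipc d f * dN S T.
Proof.
move=> f_lip; have L0 := lipc_ge0 d_ge0 f_lip.
have [L_eq0|L_neq0] := eqVneq (lipc d f) 0.
  have := orbit_avg_lip G_group d_metric act_isom bd_orbits m_mean
    (rep S) (rep T) f_lip.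
  by rewrite L_eq0 !mul0r.
have L_gt0 : 0 < lipc d f by rewrite lt_neqAle eq_sym L_neq0.
rewrite mulrC -ler_pdivrMr //; apply: lb_le_inf.
  by exists (d (rep S) (rep T)), (rep S), (rep T); split; [exact: rep_in | split; [exact: rep_in |]].
move=> r [x [y [x_in [y_in ->]]]].
rewrite ler_pdivrMr // mulrC (quot_avg_val f_lip x_in) (quot_avg_val f_lip y_in).
exact: (orbit_avg_lip G_group d_metric act_isom bd_orbits m_mean).
Qed.

Lemma quot_avg_lip0 f : lip0 d x0 f -> lip0 dN n0 (B f).
Proof.
move=> f_lip; split; last by exists (lipc d f) => S T; exact: quot_avg_bound.
rewrite /quot_avg (orbit_avg_orbcl G_group d_metric act_isom bd_orbits m_mean f_lip (rep_in n0)).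
by rewrite /orbit_avg subrr.
Qed.

Lemma quot_avg_lipc f : lip0 d x0 f -> lipc dN (B f) <= lipc d f.
Proof.
move=> f_lip; apply: lipc_le; [exact: dquot_ge0 | exact: lipc_ge0 f_lip |].
by move=> S T; exact: quot_avg_bound.
Qed.

Lemma quot_avg_lin (a : R) f h : lip0 d x0 f -> lip0 d x0 h ->
  B (fun x => a * f x + h x) = (fun S : N => a * B f S + B h S).
Proof.
by move=> f_lip h_lip; apply/funext => S; rewrite /quot_avg (orbit_avg_lin G_group d_metric act_isom bd_orbits m_mean).
Qed.

Lemma quot_avg_Psi (h : N -> R) : h n0 = 0 ->
  (forall g x, Psi_quot h (act g x) = Psi_quot h x) -> B (Psi_quot h) = h.
Proof.
move=> h0 h_inv; apply/funext => S.
by rewrite /quot_avg (orbit_avg_fix inv m_mean) // /Psi_quot qcl_rep.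
Qed.

End QuotientAverage.

(* Then
   T mu := (the element of F(M) acting on Y as f |-> mu (B f)) is an isometric
   embedding of F(N) into F(M), the pushforward Q nu := (h |-> nu (h o q)) is a
   left inverse of T of norm <= 1, and P := T o Q is a norm-one projection onto
   the range of T. *)
Section ComplementedCopy.
Variables (R : realType) (N M : Type) (dN : N -> N -> R) (n0 : N) (d : M -> M -> R) (x0 : M).
Variables (Y : set (M -> R)) (q : M -> N) (B : (M -> R) -> N -> R).
Hypotheses (dN_ge0 : forall S T, 0 <= dN S T) (d_ge0 : forall x y, 0 <= d x y)
  (Y_subspace : closed_lip_subspace d x0 Y) (Y_predual : predual_of_free d x0 Y)
  (q_x0 : q x0 = n0) (q_lip : forall x y, dN (q x) (q y) <= d x y)
  (B_lip0 : forall f, lip0 d x0 f -> lip0 dN n0 (B f))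
  (B_lipc : forall f, lip0 d x0 f -> lipc dN (B f) <= lipc d f)
  (B_lin : forall (a : R) f h, lip0 d x0 f -> lip0 d x0 h ->
     B (fun x => a * f x + h x) = (fun S => a * B f S + B h S))
  (separating : forall mu, free_space dN n0 mu -> ~ feq dN n0 mu (fun _ => 0) ->
     exists h, [/\ lip0 dN n0 h, Y (fun x => h (q x)), B (fun x => h (q x)) = h
                 & mu h <> 0]).

Let Y_lip0 f : Y f -> lip0 d x0 f. Proof. by case: Y_subspace => + _ _ _; apply. Qed.

Lemma comp_lip0 h : lip0 dN n0 h -> lip0 d x0 (fun x => h (q x)).
Proof.
move=> h_lip; split; first by rewrite q_x0; case: h_lip.
exists (lipc dN h) => x y; apply: le_trans (lipc_bound dN_ge0 h_lip _ _) _.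
by rewrite ler_wpM2l ?(lipc_ge0 dN_ge0 h_lip).
Qed.

Lemma comp_lipc h : lip0 dN n0 h -> lipc d (fun x => h (q x)) <= lipc dN h.
Proof.
move=> h_lip; apply: lipc_le => //; first exact: lipc_ge0 h_lip.
move=> x y; apply: le_trans (lipc_bound dN_ge0 h_lip _ _) _.
by rewrite ler_wpM2l ?(lipc_ge0 dN_ge0 h_lip).
Qed.

Definition pushforward (nu : (M -> R) -> R) : (N -> R) -> R := fun h => nu (fun x => h (q x)).

Lemma pushforward_free nu : free_space d x0 nu -> free_space dN n0 (pushforward nu).
Proof.
move=> nu_free eps eps_gt0; have [s s_near] := nu_free eps eps_gt0.
exists [seq (p.1, q p.2) | p <- s] => h h_lip.
have -> : deval [seq (p.1, q p.2) | p <- s] h = deval s (fun x => h (q x)).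
  by rewrite /deval big_map.
apply: le_trans (s_near _ (comp_lip0 h_lip)) _.
by apply: ler_wpM2l; [exact: ltW | exact: comp_lipc].
Qed.

Lemma pushforward_norm nu : free_space d x0 nu ->
  dualnorm dN n0 (pushforward nu) <= dualnorm d x0 nu.
Proof.
move=> nu_free; have [zero_lip zero_le1] := lip0_zero n0 dN_ge0.
apply: ge_sup; first by exists `|pushforward nu (fun _ => 0)|, (fun _ => 0).
move=> r [h [h_lip [h_le1 ->]]].
apply: (dualnorm_ge d_ge0 nu_free (comp_lip0 h_lip)).
exact: le_trans (comp_lipc h_lip) h_le1.
Qed.

Definition predual_lift (psi : (M -> R) -> R) : (M -> R) -> R :=
  match pselect (exists nu, free_space d x0 nu /\ forall f, Y f -> nu f = psi f) with
  | left ex_nu => projT1 (cid ex_nu)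
  | right _ => fun _ => 0
  end.

Definition embed (mu : (N -> R) -> R) : (M -> R) -> R :=
  predual_lift (fun f => if pselect (Y f) then mu (B f) else 0).

Lemma embed_spec mu : free_space dN n0 mu ->
  free_space d x0 (embed mu) /\ forall f, Y f -> embed mu f = mu (B f).
Proof.
move=> mu_free; have [K [K0 muK]] := free_bounded dN_ge0 mu_free.
pose psi f := if pselect (Y f) then mu (B f) else 0.
have on_Y f : Y f -> psi f = mu (B f) by rewrite /psi; case: pselect.
have [nu [nu_free nu_Y]] : exists nu, free_space d x0 nu /\ forall f, Y f -> nu f = psi f.
  have [_ lift_ex] := Y_predual; apply: lift_ex.
  - move=> a f g Yf Yg; have [_ _ Y_lin _] := Y_subspace.
    rewrite on_Y; last exact: Y_lin.
    rewrite !on_Y // (B_lin a (Y_lip0 Yf) (Y_lip0 Yg)).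
    exact: (free_linear dN_ge0 a mu_free (B_lip0 (Y_lip0 Yf)) (B_lip0 (Y_lip0 Yg))).
  - exists K => f Yf; rewrite on_Y //.
    apply: le_trans (muK _ (B_lip0 (Y_lip0 Yf))) _.
    exact: ler_wpM2l K0 _ _ (B_lipc (Y_lip0 Yf)).
rewrite /embed /predual_lift; case: pselect => [ex_nu|]; last by case; exists nu.
case: cid => nu' [nu'_free nu'_Y] /=; split => // f Yf.
by rewrite nu'_Y //; exact: on_Y.
Qed.

Lemma embed_feq mu1 mu2 : feq dN n0 mu1 mu2 -> embed mu1 = embed mu2.
Proof.
move=> mu12; rewrite /embed; congr predual_lift; apply/funext => f.
by case: pselect => // Yf; apply: mu12; apply: B_lip0; exact: Y_lip0.
Qed.

(* Q o T is the identity on F(N): this is where separation is used. *)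
Lemma pushforward_embed mu : free_space dN n0 mu ->
  feq dN n0 (pushforward (embed mu)) mu.
Proof.
move=> mu_free; have [Tmu_free Tmu_Y] := embed_spec mu_free.
have diff_free := free_lincomb dN_ge0 (-1) mu_free (pushforward_free Tmu_free).
suff diff0 : feq dN n0 (fun h => -1 * mu h + pushforward (embed mu) h) (fun _ => 0).
  by move=> h h_lip; have := diff0 h h_lip => /= ?; lra.
apply: contrapT => diff_neq0.
have [h [h_lip Yhq Bhq diff_h]] := separating diff_free diff_neq0.
by apply: diff_h; rewrite /pushforward Tmu_Y // Bhq; lra.
Qed.

Lemma embed_lin (a : R) mu nu : free_space dN n0 mu -> free_space dN n0 nu ->
  feq d x0 (embed (fun h => a * mu h + nu h)) (fun f => a * embed mu f + embed nu f).
Proof.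
move=> mu_free nu_free.
have [comb_free comb_Y] := embed_spec (free_lincomb dN_ge0 a mu_free nu_free).
have [Tmu_free Tmu_Y] := embed_spec mu_free; have [Tnu_free Tnu_Y] := embed_spec nu_free.
apply: (feq_of_agree_on_predual d_ge0 Y_subspace Y_predual comb_free).
  exact: free_lincomb.
by move=> f Yf; rewrite comb_Y // Tmu_Y // Tnu_Y.
Qed.

(* T is an isometry: <= because Y is norming and B has norm <= 1,
   >= because mu = Q (T mu) and Q has norm <= 1. *)
Lemma embed_norm mu : free_space dN n0 mu -> dualnorm d x0 (embed mu) = dualnorm dN n0 mu.
Proof.
move=> mu_free; have [Tmu_free Tmu_Y] := embed_spec mu_free.
apply/eqP; rewrite eq_le; apply/andP; split.
  have [Y_norming _] := Y_predual; rewrite -(Y_norming _ Tmu_free).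
  apply: ge_sup.
    have [_ Y0 _ _] := Y_subspace; exists `|embed mu (fun _ => 0)|, (fun _ => 0).
    by split => //; split => //; case: (lip0_zero x0 d_ge0).
  move=> r [f [Yf [f_le1 ->]]]; rewrite Tmu_Y //.
  apply: (dualnorm_ge dN_ge0 mu_free (B_lip0 (Y_lip0 Yf))).
  exact: le_trans (B_lipc (Y_lip0 Yf)) f_le1.
rewrite -(dualnorm_feq (pushforward_embed mu_free)); exact: pushforward_norm.
Qed.

Theorem one_complemented_of_averaging : one_complemented_copy dN n0 d x0.
Proof.
exists embed, (fun nu => embed (pushforward nu)); split.
- by move=> mu mu_free; case: (embed_spec mu_free).
- exact: embed_lin.
- exact: embed_norm.
split.
- by move=> nu nu_free; case: (embed_spec (pushforward_free nu_free)).
- by move=> a mu nu mu_free nu_free; apply: embed_lin; exact: pushforward_free.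
- move=> nu nu_free; rewrite embed_norm; last exact: pushforward_free.
  exact: pushforward_norm.
- by move=> nu nu_free; exists (pushforward nu); split => //; exact: pushforward_free.
- by move=> mu mu_free; rewrite (embed_feq (pushforward_embed mu_free)).
Qed.

End ComplementedCopy.

Theorem corollary4p8 (R : realType) (G : topologicalType)
  (mul : G -> G -> G) (inv : G -> G) (e : G)
  (M : Type) (d : M -> M -> R) (x0 : M) (act : G -> M -> M)
  (Y : set (M -> R)) :
  topological_group mul inv e ->
  hausdorff_space G ->
  amenable R mul e ->
  (loc_compact_space G \/ SIN_group mul inv e) ->
  is_metric d ->
  cont_isom_action mul e d act ->
  bounded_orbits d act ->
  closed_lip_subspace d x0 Y ->
  predual_of_free d x0 Y ->
  (forall g f, Y f -> Y (lip_shift inv act x0 g f)) ->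
  (let Z := [set f : orbit_quot d act -> R |
              lip0 (dquot (act:=act)) (qcl d act x0) f /\
              Y (Psi_quot f) /\ lip0G d x0 act (Psi_quot f)] in
   forall mu, free_space (dquot (act:=act)) (qcl d act x0) mu ->
     ~ feq (dquot (act:=act)) (qcl d act x0) mu (fun _ => 0) ->
     exists f, Z f /\ mu f <> 0) ->
  one_complemented_copy (dquot (act:=act)) (qcl d act x0) d x0.
Proof.
move=> G_group _ [m m_mean] _ d_metric act_isom bd_orbits Y_subspace Y_predual _ Z_sep.
have d_ge0 : forall x y, 0 <= d x y by case: d_metric.
apply: (one_complemented_of_averaging (dquot_ge0 d_metric act_isom) d_ge0
  Y_subspace Y_predual erefl (dquot_le d_metric act_isom)
  (quot_avg_lip0 G_group d_metric act_isom bd_orbits m_mean)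
  (quot_avg_lipc G_group d_metric act_isom bd_orbits m_mean)
  (quot_avg_lin G_group d_metric act_isom bd_orbits m_mean)).
move=> mu mu_free mu_neq0; have [h [[h_lip [Yh [_ h_inv]]] mu_h]] := Z_sep mu mu_free mu_neq0.
exists h; split => //; apply: (quot_avg_Psi inv m_mean) => //; by case: h_lip.
Qed.
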